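(* Let $n, m$ be positive integers and $\alpha \in (0,1)$. Form a random $m \times n$ array of zeros and ones in which each of the $mn$ entries is independently equal to $1$ with probability $\alpha$ and to $0$ with probability $1-\alpha$. Let $X$ be the number of deficient sets of three rows. Put $$p_n(\alpha) = (1-\alpha^3)^n + 3\bigl(1-\alpha^2(1-\alpha)\bigr)^n, \qquad \zeta(n) = \sqrt{\frac{2}{3e}}\left(\frac{1}{p_n(\alpha)}\right)^{1/2}.$$ If $m \le \zeta(n)$, then $\mathbb{P}(X=0) > 0$. Consequently, the largest number of rows in a $\mathcal{C}(n,2,3,A,1)$ partial covering array, with each row having expected weight $k=\alpha n$ in this random model, is at least $\zeta(n)$.
   Context: Let $A = \{(0,1,1),(1,0,1),(1,1,0),(1,1,1)\}$. A set of three rows of a $0$-$1$ array is called deficient if at least one of the four vectors in $A$ does not appear among the columns of the $3 \times n$ subarray formed by those three rows (in the sense that for some vector in $A$ no column, restricted to the three rows, equals it). A partial covering array $\mathcal{C}(n,2,3,A,1)$ is an $m\times n$ $0$-$1$ array such that for every choice of three rows, each vector of $A$ appears at least once among the columns of the selected rows; equivalently, no set of three rows is deficient. (Equivalently, viewing rows as subsets of an $n$-set, for any three rows $A',B',C'$ the sets $A'\cap B'\cap C'$, $A'\cap B'\cap C'^{c}$, $A'\cap B'^{c}\cap C'$, $A'^{c}\cap B'\cap C'$ are all nonempty.) *)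

From HB Require Import structures.
From mathcomp Require Import all_boot all_order all_algebra.
From mathcomp Require Import reals.
From mathcomp Require Import sequences.
Set Implicit Arguments. Unset Strict Implicit. Unset Printing Implicit Defensive.
Import Order.TTheory GRing.Theory Num.Theory.
Local Open Scope ring_scope.

(* An m x n 0-1 array: entry (i,j) is true iff it equals 1. *)
Definition array (m n : nat) := {ffun 'I_m * 'I_n -> bool}.

Definition vecA : seq (bool * bool * bool) :=
  [:: (false, true, true); (true, false, true); (true, true, false);
      (true, true, true)].

Definition col3 m n (M : array m n) (i j k : 'I_m) (c : 'I_n) :=
  (M (i, c), M (j, c), M (k, c)).

Definition deficient m n (M : array m n) (i j k : 'I_m) : bool :=
  ~~ all (fun v => [exists c, col3 M i j k c == v]) vecA.

Definition num_deficient m n (M : array m n) : nat :=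
  #|[set t : 'I_m * 'I_m * 'I_m |
      [&& (t.1.1 < t.1.2)%N, (t.1.2 < t.2)%N & deficient M t.1.1 t.1.2 t.2]]|.

(* M is a partial covering array C(n,2,3,A,1): no set of three distinct rows
   is deficient. *)
Definition is_PCA m n (M : array m n) : Prop :=
  forall i j k : 'I_m, i != j -> j != k -> i != k -> ~~ deficient M i j k.

Definition array_prob (R : realType) m n (alpha : R) (M : array m n) : R :=
  \prod_(p : 'I_m * 'I_n) (if M p then alpha else 1 - alpha).

Definition prob_X0 (R : realType) m n (alpha : R) : R :=
  \sum_(M : array m n | num_deficient M == 0%N) array_prob alpha M.

Definition p_n (R : realType) (n : nat) (alpha : R) : R :=
  (1 - alpha ^+ 3) ^+ n + 3%:R * (1 - alpha ^+ 2 * (1 - alpha)) ^+ n.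

Definition zeta (R : realType) (n : nat) (alpha : R) : R :=
  Num.sqrt (2%:R / (3%:R * expR 1)) * Num.sqrt ((p_n n alpha)^-1).

(* Deletion method.  In the random array, a fixed triple of rows misses a
   given pattern v of A in all n independent columns with probability
   (1 - q_v)^n, q_v being the probability of v in one column, so by
   the union bound it is deficient with probability at most p_n(alpha).  For an
   array with 2m rows the expected number of deficient triples is thus at most
   C(2m,3) p_n(alpha) <= 4/3 m (m^2 p_n(alpha)) < m + 1, because
   m <= zeta(n) gives m^2 p_n(alpha) <= 2/(3e) < 3/4.  Some array therefore has
   at most m deficient triples; deleting the last row of each leaves at least m
   rows without a deficient triple, i.e. a partial covering array, and every
   array has positive probability. *)

From mathcomp Require Import all_boot all_order all_algebra.
From mathcomp Require Import reals sequences exp zify ring lra.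
Import Order.TTheory GRing.Theory Num.Theory.

Set Implicit Arguments. Unset Strict Implicit. Unset Printing Implicit Defensive.

Local Open Scope ring_scope.

Section ProductMeasure.
Variables (R : realType) (a : R).

Definition bern (b : bool) : R := if b then a else 1 - a.

Definition ffun_prob (I : finType) (f : {ffun I -> bool}) : R := \prod_i bern (f i).

Definition expect (I : finType) (X : {ffun I -> bool} -> R) : R :=
  \sum_f ffun_prob f * X f.

Lemma bern_sum : bern true + bern false = 1.
Proof. by rewrite /bern addrC subrK. Qed.

Lemma natr_forall (I : finType) (P : pred I) :
  ([forall i, P i] : nat)%:R = \prod_i (P i : nat)%:R :> R.
Proof.
have [/forallP allP | /forallPn[i /negbTE Pi]] := boolP [forall i, P i].
  by rewrite big1 // => i _; rewrite allP.
by rewrite (bigD1 i) //= Pi mul0r.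
Qed.

Lemma expect_prod (I : finType) (F : I -> bool -> R) :
  expect (fun f => \prod_i F i (f i)) =
  \prod_i (bern true * F i true + bern false * F i false).
Proof.
transitivity (\sum_(f : {ffun I -> bool}) \prod_i (bern (f i) * F i (f i))).
  by apply: eq_bigr => f _; rewrite big_split.
rewrite -(bigA_distr_bigA (fun i b => bern b * F i b)).
by apply: eq_bigr => i _; rewrite big_bool.
Qed.

Lemma expect_cst (I : finType) (c : R) : expect (fun _ : {ffun I -> bool} => c) = c.
Proof.
rewrite /expect -mulr_suml /ffun_prob -(bigA_distr_bigA (fun _ => bern)).
by rewrite big1 ?mul1r // => i _; rewrite big_bool /= bern_sum.
Qed.

Lemma expect_sum (I : finType) (J : Type) (s : seq J) (P : pred J)
    (X : J -> {ffun I -> bool} -> R) :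
  expect (fun f => \sum_(j <- s | P j) X j f) = \sum_(j <- s | P j) expect (X j).
Proof. by rewrite /expect; under eq_bigr do rewrite mulr_sumr; exact: exchange_big. Qed.

Lemma expect_negb (I : finType) (E : pred {ffun I -> bool}) :
  expect (fun f => (~~ E f : nat)%:R) = 1 - expect (fun f => (E f : nat)%:R).
Proof.
rewrite -[X in X - _](expect_cst I 1) /expect -sumrB.
apply: eq_bigr => f _.
by case: (E f); rewrite /= ?mulr1n ?mulr0n ?mulr1 ?mulr0 ?subrr ?subr0.
Qed.

Lemma expect_forall (I : finType) (P : I -> pred bool) :
  expect (fun f => ([forall i, P i (f i)] : nat)%:R) =
  \prod_i \sum_(b | P i b) bern b.
Proof.
transitivity (expect (fun f => \prod_i (P i (f i) : nat)%:R)).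
  by apply: eq_bigr => f _; rewrite natr_forall.
rewrite (expect_prod (fun i b => (P i b : nat)%:R)); apply: eq_bigr => i _.
by rewrite big_mkcond big_bool /=; case: (P i true); case: (P i false);
  rewrite /= ?mulr1 ?mulr0 ?add0r ?addr0.
Qed.

Lemma expect_pattern3 (I : finType) (i j k : I) (v : bool * bool * bool) :
  i != j -> j != k -> i != k ->
  expect (fun f : {ffun I -> bool} => ((f i, f j, f k) == v : nat)%:R) =
  bern v.1.1 * bern v.1.2 * bern v.2.
Proof.
case: v => [[x y] z] ij jk ik /=.
have [ji kj ki] : [/\ j != i, k != j & k != i] by split; rewrite eq_sym.
pose P r := [pred b | [&& (r == i) ==> (b == x), (r == j) ==> (b == y)
                        & (r == k) ==> (b == z)]].
have eventE (f : {ffun I -> bool}) :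
    ((f i, f j, f k) == (x, y, z)) = [forall r, P r (f r)].
  apply/eqP/forallP => [[fi fj fk] r | fP].
    by apply/and3P; split; apply/implyP => /eqP ->; rewrite ?fi ?fj ?fk.
  move: (fP i) (fP j) (fP k).
  rewrite /= !eqxx (negbTE ij) (negbTE jk) (negbTE ik).
  by rewrite (negbTE ji) (negbTE kj) (negbTE ki) /= !andbT => /eqP-> /eqP-> /eqP->.
transitivity (expect (fun f => ([forall r, P r (f r)] : nat)%:R)).
  by apply: eq_bigr => f _; rewrite eventE.
rewrite (expect_forall P).
have marginalE r : \sum_(b | P r b) bern b =
    (if r == i then bern x else 1) * (if r == j then bern y else 1) *
    (if r == k then bern z else 1).
  have [->|ri] := eqVneq r i.
    rewrite (negbTE ij) (negbTE ik) !mulr1 (big_pred1 x) // => b.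
    by rewrite /= eqxx (negbTE ij) (negbTE ik) andbT.
  have [->|rj] := eqVneq r j.
    rewrite (negbTE jk) mul1r mulr1 (big_pred1 y) // => b.
    by rewrite /= eqxx (negbTE ji) (negbTE jk) andbT.
  have [->|rk] := eqVneq r k.
    by rewrite !mul1r (big_pred1 z) // => b; rewrite /= eqxx (negbTE ki) (negbTE kj).
  rewrite !mulr1 (eq_bigl predT) ?big_bool /= ?bern_sum // => b.
  by rewrite /= (negbTE ri) (negbTE rj) (negbTE rk).
by rewrite (eq_bigr _ (fun r _ => marginalE r)) !big_split /= -!big_mkcond !big_pred1_eq.
Qed.

Lemma expect_columns (I J : finType) (X : {ffun I -> bool} -> R) :
  expect (fun M : {ffun I * J -> bool} => \prod_j X [ffun i => M (i, j)]) =
  \prod_(j : J) expect X.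
Proof.
pose uncurry (C : {ffun J -> {ffun I -> bool}}) : {ffun I * J -> bool} :=
  [ffun p => C p.2 p.1].
pose curry (M : {ffun I * J -> bool}) := [ffun j => [ffun i => M (i, j)]].
have uncurry_bij : bijective uncurry.
  exists curry => [C | M]; apply/ffunP.
    by move=> j; apply/ffunP => i; rewrite !ffunE.
  by move=> [i j]; rewrite !ffunE.
rewrite /expect (reindex uncurry) /=; last exact: onW_bij.
rewrite bigA_distr_bigA; apply: eq_bigr => C _.
have probE : ffun_prob (uncurry C) = \prod_j ffun_prob (C j).
  by rewrite /ffun_prob exchange_big pair_big; apply: eq_bigr => -[i j] _; rewrite ffunE.
rewrite probE -big_split; apply: eq_bigr => j _; congr (_ * X _).
by apply/ffunP => i; rewrite !ffunE.
Qed.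

Hypothesis a01 : 0 <= a <= 1.

Lemma bern_ge0 b : 0 <= bern b.
Proof. by case/andP: a01 => a_ge0 a_le1; case: b; rewrite /bern ?subr_ge0. Qed.

Lemma ffun_prob_ge0 (I : finType) (f : {ffun I -> bool}) : 0 <= ffun_prob f.
Proof. by apply: prodr_ge0 => i _; exact: bern_ge0. Qed.

Lemma ler_expect (I : finType) (X Y : {ffun I -> bool} -> R) :
  (forall f, X f <= Y f) -> expect X <= expect Y.
Proof. by move=> XY; apply: ler_sum => f _; rewrite ler_wpM2l ?ffun_prob_ge0. Qed.

Lemma exists_lt_of_expect_lt (I : finType) (X : {ffun I -> bool} -> R) c :
  expect X < c -> exists f, X f < c.
Proof.
move=> EXc; apply/existsP; apply: contraLR EXc.
rewrite negb_exists -leNgt => /forallP Xc.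
by rewrite -(expect_cst I c); apply: ler_expect => f; rewrite leNgt Xc.
Qed.

End ProductMeasure.

Lemma p_n_ge0 (R : realType) (a : R) n : 0 <= a <= 1 -> 0 <= p_n n a.
Proof.
case/andP=> a_ge0 a_le1.
rewrite addr_ge0 ?mulr_ge0 ?exprn_ge0 // subr_ge0; nra.
Qed.

Lemma p_n_gt0 (R : realType) (a : R) n : 0 <= a < 1 -> 0 < p_n n a.
Proof.
case/andP=> a_ge0 a_lt1.
have : 0 < (1 - a ^+ 3) ^+ n by rewrite exprn_gt0 // subr_gt0; nra.
have : 0 <= (1 - a ^+ 2 * (1 - a)) ^+ n by rewrite exprn_ge0 // subr_ge0; nra.
rewrite /p_n; lra.
Qed.

Section Deficiency.
Variables (R : realType) (a : R).

Lemma expect_pattern_missing m n (i j k : 'I_m) (v : bool * bool * bool) :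
  i != j -> j != k -> i != k ->
  expect a (fun M : array m n => (~~ [exists c, col3 M i j k c == v] : nat)%:R) =
  (1 - bern a v.1.1 * bern a v.1.2 * bern a v.2) ^+ n.
Proof.
move=> ij jk ik.
pose X (col : {ffun 'I_m -> bool}) := (~~ ((col i, col j, col k) == v) : nat)%:R : R.
transitivity (expect a (fun M : array m n => \prod_c X [ffun r => M (r, c)])).
  apply: eq_bigr => M _; rewrite negb_exists natr_forall.
  by congr (_ * _); apply: eq_bigr => c _; rewrite /X !ffunE.
rewrite expect_columns prodr_const card_ord /X expect_negb.
by rewrite expect_pattern3.
Qed.

Lemma natr_negb_all_le (T : Type) (P : pred T) (s : seq T) :
  ((~~ all P s) : nat)%:R <= \sum_(v <- s) ((~~ P v) : nat)%:R :> R.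
Proof.
elim: s => [|x s IH]; first by rewrite big_nil.
rewrite big_cons /=; case: (P x) => /=; first by rewrite add0r.
by rewrite lerDl sumr_ge0 // => v _; exact: ler0n.
Qed.

Lemma expect_deficient_le m n (i j k : 'I_m) : 0 <= a <= 1 ->
  i != j -> j != k -> i != k ->
  expect a (fun M : array m n => (deficient M i j k : nat)%:R) <= p_n n a.
Proof.
move=> a01 ij jk ik.
apply: le_trans (ler_expect a01 (fun M => natr_negb_all_le _ _)) _.
rewrite expect_sum.
under eq_bigr => v _ do rewrite expect_pattern_missing //.
rewrite /vecA !big_cons big_nil /p_n /bern /=.
have -> : 1 - (1 - a) * a * a = 1 - a ^+ 2 * (1 - a) by ring.
have -> : 1 - a * (1 - a) * a = 1 - a ^+ 2 * (1 - a) by ring.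
have -> : 1 - a * a * (1 - a) = 1 - a ^+ 2 * (1 - a) by ring.
have -> : 1 - a * a * a = 1 - a ^+ 3 by ring.
lra.
Qed.

End Deficiency.

Definition increasing3 N (t : 'I_N * 'I_N * 'I_N) := (t.1.1 < t.1.2 < t.2)%N.

Lemma card_increasing3_le N :
  (#|[pred t : 'I_N * 'I_N * 'I_N | increasing3 t]| <= 'C(N, 3))%N.
Proof.
pose f (t : 'I_N * 'I_N * 'I_N) := [tuple t.1.1; t.1.2; t.2].
have f_inj : injective f by move=> [[? ?] ?] [[? ?] ?] /(congr1 val) [-> -> ->].
rewrite -card_ltn_sorted_tuples -(card_imset _ f_inj); apply: subset_leq_card.
by apply/subsetP => _ /imsetP[t + ->]; rewrite !inE /= andbT.
Qed.

Lemma ffact_le_expn n k : (n ^_ k <= n ^ k)%N.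
Proof.
rewrite ffact_prod -[X in (_ <= _ ^ X)%N](card_ord k) -prod_nat_const.
by apply: leq_prod => i _; exact: leq_subr.
Qed.

Lemma num_deficientE m n (M : array m n) :
  num_deficient M = (\sum_(t | increasing3 t) deficient M t.1.1 t.1.2 t.2)%N.
Proof.
rewrite /num_deficient -sum1_card big_mkcond [RHS]big_mkcond /=.
apply: eq_bigr => t _.
by rewrite inE andbA /increasing3; case: (_ < _ < _)%N; case: deficient.
Qed.

Lemma expect_num_deficient_le (R : realType) (a : R) N n : 0 <= a <= 1 ->
  expect a (fun M : array N n => (num_deficient M)%:R) <= 'C(N, 3)%:R * p_n n a.
Proof.
move=> a01.
rewrite (_ : expect a _ = \sum_(t | increasing3 t)
           expect a (fun M : array N n => (deficient M t.1.1 t.1.2 t.2 : nat)%:R)).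
  apply: le_trans (_ : \sum_(t | increasing3 t) p_n n a <= _).
    apply: ler_sum => -[[i j] k] /andP[/= lt_ij lt_jk].
    by apply: expect_deficient_le => //; apply/negbT/ltn_eqF; rewrite // (ltn_trans lt_ij).
  rewrite sumr_const -[_ *+ _]mulr_natl ler_wpM2r ?ler_nat ?card_increasing3_le //.
  exact: p_n_ge0.
rewrite -expect_sum; apply: eq_bigr => M _.
by rewrite num_deficientE natr_sum.
Qed.

Section Alteration.
Variables (N n : nat).

Definition restrict_rows m (f : 'I_m -> 'I_N) (M : array N n) : array m n :=
  [ffun p => M (f p.1, p.2)].

Lemma deficient_restrict_rows m (f : 'I_m -> 'I_N) (M : array N n) i j k :
  deficient (restrict_rows f M) i j k = deficient M (f i) (f j) (f k).
Proof.
by congr (~~ _); apply: eq_all => v; apply: eq_existsb => c; rewrite /col3 !ffunE.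
Qed.

Lemma deficient_perm (M : array N n) (sigma : bool * bool * bool -> bool * bool * bool)
    i j k i' j' k' :
  involutive sigma -> perm_eq (map sigma vecA) vecA ->
  (forall c, col3 M i' j' k' c = sigma (col3 M i j k c)) ->
  deficient M i' j' k' = deficient M i j k.
Proof.
move=> sigmaK sigma_vecA colE; rewrite /deficient -(perm_all _ sigma_vecA) all_map.
congr (~~ _); apply: eq_all => v /=; apply: eq_existsb => c.
by rewrite colE (inj_eq (can_inj sigmaK)).
Qed.

Lemma deficient_swap12 (M : array N n) i j k : deficient M j i k = deficient M i j k.
Proof. by apply: (@deficient_perm _ (fun v => (v.1.2, v.1.1, v.2))) => // -[[? ?] ?]. Qed.

Lemma deficient_swap23 (M : array N n) i j k : deficient M i k j = deficient M i j k.
Proof. by apply: (@deficient_perm _ (fun v => (v.1.1, v.2, v.1.2))) => // -[[? ?] ?]. Qed.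

Lemma not_deficient_of_increasing (M : array N n) (K : {pred 'I_N}) :
  (forall i j k, i \in K -> j \in K -> k \in K -> (i < j)%N -> (j < k)%N ->
     ~~ deficient M i j k) ->
  forall i j k, i \in K -> j \in K -> k \in K -> i != j -> j != k -> i != k ->
     ~~ deficient M i j k.
Proof.
move=> K_ok i j k iK jK kK; rewrite -!val_eqE !neq_ltn.
case/orP=> ij /orP[] jk /orP[] ik;
  first [ lia
        | by apply: K_ok
        | by rewrite -deficient_swap12; apply: K_ok
        | by rewrite -deficient_swap23; apply: K_ok
        | by rewrite -deficient_swap12 -deficient_swap23; apply: K_ok
        | by rewrite -deficient_swap23 -deficient_swap12; apply: K_ok
        | by rewrite -deficient_swap12 -deficient_swap23 -deficient_swap12; apply: K_ok ].
Qed.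

Lemma exists_PCA_of_num_deficient_le m (M0 : array N n) :
  (num_deficient M0 + m <= N)%N -> exists M : array m n, is_PCA M.
Proof.
move=> le_N.
pose D := [set t | increasing3 t && deficient M0 t.1.1 t.1.2 t.2].
have cardD : #|D| = num_deficient M0.
  by apply: eq_card => t; rewrite !inE andbA.
pose K := ~: [set t.2 | t in D].
have m_le_K : (m <= #|K|)%N.
  rewrite -(leq_add2l #|[set t.2 | t in D]|) cardsC card_ord (leq_trans _ le_N) //.
  by rewrite leq_add2r -cardD leq_imset_card.
have K_ok i j k : i \in K -> j \in K -> k \in K -> (i < j)%N -> (j < k)%N ->
    ~~ deficient M0 i j k.
  move=> _ _ kK lt_ij lt_jk; apply: contraL kK => def_ijk.
  rewrite in_setC negbK; apply/imsetP; exists (i, j, k) => //.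
  by rewrite inE /increasing3 /= lt_ij lt_jk def_ijk.
pose f (i : 'I_m) : 'I_N := enum_val (widen_ord m_le_K i).
have f_inj : injective f by move=> i j /enum_val_inj [] /val_inj.
exists (restrict_rows f M0) => i j k ij jk ik; rewrite deficient_restrict_rows.
by apply: (not_deficient_of_increasing K_ok); rewrite ?enum_valP ?(inj_eq f_inj).
Qed.

End Alteration.

Section Bounds.
Variables (R : realType) (a : R).

Lemma exists_PCA_of_sqr_mul_p_n_le m n : 0 <= a <= 1 ->
  m%:R ^+ 2 * p_n n a <= 3 / 4 -> exists M : array m n, is_PCA M.
Proof.
move=> a01 le_mp.
have p_ge0 := p_n_ge0 n a01.
have C_le : 6 * 'C(m + m, 3)%:R <= 8 * m%:R ^+ 3 :> R.
  have : (6 * 'C(m + m, 3) <= 8 * m ^ 3)%N.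
    rewrite mulnC (bin_ffact (m + m) 3) (leq_trans (ffact_le_expn _ _)) //.
    by rewrite addnn -mul2n expnMn.
  by rewrite -(ler_nat R) !natrM !exprS expr0 mulr1.
have E_lt : 'C(m + m, 3)%:R * p_n n a < m.+1%:R.
  have m_ge0 : 0 <= m%:R :> R by rewrite ler0n.
  have := ler_wpM2r p_ge0 C_le; have := ler_wpM2l m_ge0 le_mp.
  rewrite -[m.+1]addn1 natrD; lra.
have := le_lt_trans (expect_num_deficient_le _ n a01) E_lt.
case/(exists_lt_of_expect_lt a01) => M0.
rewrite ltr_nat ltnS -(leq_add2r m) => le_m.
exact: exists_PCA_of_num_deficient_le le_m.
Qed.

Lemma sqr_mul_p_n_le_of_le_zeta n (x : R) : 0 < p_n n a -> 0 <= x ->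
  x <= zeta n a -> x ^+ 2 * p_n n a <= 2 / (3 * expR 1).
Proof.
move=> p_gt0 x_ge0 le_x.
have zeta_sqr : zeta n a ^+ 2 = 2 / (3 * expR 1) / p_n n a.
  by rewrite /zeta exprMn !sqr_sqrtr ?invr_ge0 ?divr_ge0 ?mulr_ge0 ?expR_ge0 ?ltW.
have := ler_pM x_ge0 x_ge0 le_x le_x; rewrite -!expr2 zeta_sqr => le_sqr.
by rewrite -[leRHS](divfK (lt0r_neq0 p_gt0)) ler_wpM2r // ltW.
Qed.

Lemma prob_X0_gt0 m n (M : array m n) : 0 < a < 1 -> is_PCA M -> 0 < prob_X0 m n a.
Proof.
case/andP=> a_gt0 a_lt1 PCA_M.
have M_ok : num_deficient M == 0%N.
  rewrite num_deficientE sum_nat_eq0; apply/forallP => -[[i j] k].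
  apply/implyP => /andP[/= lt_ij lt_jk]; rewrite eqb0.
  by apply: PCA_M; apply/negbT/ltn_eqF; rewrite // (ltn_trans lt_ij).
rewrite /prob_X0 (bigD1 M) //= ltr_wpDr ?sumr_ge0 // => [M' _|].
  by apply: (ffun_prob_ge0 (a := a)); rewrite !ltW.
by apply: prodr_gt0 => p _; rewrite /bern; case: (M p); rewrite ?subr_gt0.
Qed.

End Bounds.

Theorem theorem2 (R : realType) (n m : nat) (alpha : R) :
  (0 < n)%N -> (0 < m)%N -> 0 < alpha < 1 ->
  m%:R <= zeta n alpha ->
  0 < prob_X0 m n alpha /\ exists M : array m n, is_PCA M.
Proof.
move=> _ _ alpha01 le_m.
have [alpha_gt0 alpha_lt1] := andP alpha01.
have p_gt0 : 0 < p_n n alpha by rewrite p_n_gt0 // ltW.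
have le_mp := sqr_mul_p_n_le_of_le_zeta p_gt0 (ler0n _ m) le_m.
have e_ge1 : 1 <= expR (1 : R) by have := expR_ge1Dx (1 : R); lra.
have [M PCA_M] : exists M : array m n, is_PCA M.
  apply: (exists_PCA_of_sqr_mul_p_n_le (a := alpha)); first by rewrite !ltW.
  apply: le_trans le_mp _; rewrite ler_pdivrMr ?mulr_gt0 ?expR_gt0 //; lra.
by split; [exact: prob_X0_gt0 PCA_M | exists M].
Qed.
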